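(* Let $T$, $S$, $A$ be closed Hermitian subspaces in $X^2$ with $D(T)=D(S)=:D\subset D(A)$ and $T=S+A$. Suppose that $T(0)^\perp$ reduces both $S$ and $A$. Then $$T_sx=S_sx+A_sx\quad\text{for all }x\in D,$$ and, setting $\hat S_s:=S\cap(T(0)^\perp)^2$ and $\hat A_s:=A\cap(T(0)^\perp)^2$, one has $$\hat S_s=S_s,\qquad \hat A_s\subset A_s,$$ and $\hat A_s$ is a closed Hermitian operator in $T(0)^\perp$ with $D\subset D(\hat A_s)$.
   Context: $X$ is a complex Hilbert space and $X^2=X\times X$ carries the inner product $\langle (x,f),(y,g)\rangle=\langle x,y\rangle+\langle f,g\rangle$. A subspace $T$ in $X^2$ means a linear subspace of $X^2$ (a linear relation); a linear operator in $X$ is identified with its graph. Notation: $D(T)=\{x:(x,f)\in T \text{ for some } f\}$, $T(x)=\{f:(x,f)\in T\}$. The adjoint is $T^*=\{(y,g)\in X^2:\langle g,x\rangle=\langle y,f\rangle \text{ for all }(x,f)\in T\}$; $T$ is Hermitian if $T\subset T^*$. For subspaces $S,A$ in $X^2$, $S+A=\{(x,f+g):(x,f)\in S,(x,g)\in A\}$. For a closed subspace $T$, set $T_\infty=\{(0,g)\in X^2:(0,g)\in T\}$ and $T_s=T\ominus T_\infty$ (orthogonal complement of $T_\infty$ in $T$), so $T=T_s\oplus T_\infty$; $T_s$ is the graph of a linear operator (the operator part of $T$) with $D(T_s)=D(T)$ and $R(T_s)\subset T(0)^\perp$. Reducing subspace: if $X_1$ is a closed subspace of $X$ and $P$ the orthogonal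 projection of $X$ onto $X_1$, then $X_1$ reduces the subspace $T$ if $\{(Px,Pf):(x,f)\in T\}\subset T$. *)

From Stdlib Require Import Reals.
Open Scope R_scope.
Set Implicit Arguments.

Definition C : Type := (R * R)%type.
Definition C0 : C := (0, 0).
Definition C1 : C := (1, 0).
Definition Cadd (a b : C) : C := (fst a + fst b, snd a + snd b).
Definition Cmul (a b : C) : C :=
  (fst a * fst b - snd a * snd b, fst a * snd b + snd a * fst b).
Definition Cconj (a : C) : C := (fst a, - snd a).

Record CHilbert := {
  hs :> Type;
  hadd : hs -> hs -> hs;
  hzero : hs;
  hopp : hs -> hs;
  hscal : C -> hs -> hs;
  hip : hs -> hs -> C;
  hadd_assoc : forall x y z, hadd x (hadd y z) = hadd (hadd x y) z;
  hadd_comm : forall x y, hadd x y = hadd y x;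
  hadd_0 : forall x, hadd x hzero = x;
  hadd_opp : forall x, hadd x (hopp x) = hzero;
  hscal_assoc : forall a b x, hscal a (hscal b x) = hscal (Cmul a b) x;
  hscal_1 : forall x, hscal C1 x = x;
  hscal_distr_v : forall a x y, hscal a (hadd x y) = hadd (hscal a x) (hscal a y);
  hscal_distr_c : forall a b x, hscal (Cadd a b) x = hadd (hscal a x) (hscal b x);
  hip_add_l : forall x y z, hip (hadd x y) z = Cadd (hip x z) (hip y z);
  hip_scal_l : forall a x y, hip (hscal a x) y = Cmul a (hip x y);
  hip_conj : forall x y, hip y x = Cconj (hip x y);
  hip_pos : forall x, 0 <= fst (hip x x);
  hip_def : forall x, hip x x = C0 -> x = hzero;
  hcomplete : forall u : nat -> hs,
    (forall eps, 0 < eps -> exists N, forall m n, (N <= m)%nat -> (N <= n)%nat ->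
       sqrt (fst (hip (hadd (u m) (hopp (u n))) (hadd (u m) (hopp (u n))))) < eps) ->
    exists l, forall eps, 0 < eps -> exists N, forall n, (N <= n)%nat ->
       sqrt (fst (hip (hadd (u n) (hopp l)) (hadd (u n) (hopp l)))) < eps
}.

Arguments hadd {c}. Arguments hzero {c}. Arguments hopp {c}.
Arguments hscal {c}. Arguments hip {c}.

Section Rel.
Context {X : CHilbert}.

Definition hsub (x y : X) : X := hadd x (hopp y).
Definition nrm2 (x : X) : R := fst (hip x x).

Definition subspace (M : X -> Prop) : Prop :=
  M hzero /\ (forall x y, M x -> M y -> M (hadd x y)) /\
  (forall a x, M x -> M (hscal a x)).

Definition converges (u : nat -> X) (l : X) : Prop :=
  forall eps, 0 < eps -> exists N, forall n, (N <= n)%nat -> sqrt (nrm2 (hsub (u n) l)) < eps.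

Definition closed_subspace (M : X -> Prop) : Prop :=
  subspace M /\ forall u l, (forall n, M (u n)) -> converges u l -> M l.

Definition perp (M : X -> Prop) : X -> Prop :=
  fun y => forall z, M z -> hip z y = C0.

Definition is_orth_proj (M : X -> Prop) (P : X -> X) : Prop :=
  forall x, M (P x) /\ perp M (hsub x (P x)).

(** Subspaces of X^2 (linear relations): T x f means (x,f) in T. *)
Definition rel (Y : CHilbert) := Y -> Y -> Prop.

Definition ip2 (x f y g : X) : C := Cadd (hip x y) (hip f g).

Definition subspace2 (T : rel X) : Prop :=
  T hzero hzero /\
  (forall x f y g, T x f -> T y g -> T (hadd x y) (hadd f g)) /\
  (forall a x f, T x f -> T (hscal a x) (hscal a f)).

Definition converges2 (u v : nat -> X) (x f : X) : Prop :=
  forall eps, 0 < eps -> exists N, forall n, (N <= n)%nat ->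
    sqrt (nrm2 (hsub (u n) x) + nrm2 (hsub (v n) f)) < eps.

Definition closed2 (T : rel X) : Prop :=
  subspace2 T /\
  forall u v x f, (forall n, T (u n) (v n)) -> converges2 u v x f -> T x f.

Definition dom (T : rel X) : X -> Prop := fun x => exists f, T x f.
Definition at0 (T : rel X) : X -> Prop := fun f => T hzero f.

Definition adjoint (T : rel X) : rel X :=
  fun y g => forall x f, T x f -> hip g x = hip y f.

Definition hermitian (T : rel X) : Prop := forall y g, T y g -> adjoint T y g.

Definition rel_sum (S A : rel X) : rel X :=
  fun x h => exists f g, S x f /\ A x g /\ h = hadd f g.

(** T_infty and T_s = T (-) T_infty *)
Definition Tinf (T : rel X) : rel X := fun x g => x = hzero /\ T x g.
Definition Tsop (T : rel X) : rel X :=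
  fun x f => T x f /\ forall y g, Tinf T y g -> ip2 x f y g = C0.

Definition reduces (X1 : X -> Prop) (T : rel X) : Prop :=
  closed_subspace X1 /\
  forall P, is_orth_proj X1 P -> forall x f, T x f -> T (P x) (P f).

Definition restr2 (T : rel X) (M : X -> Prop) : rel X := fun x f => T x f /\ M x /\ M f.

Definition is_operator (T : rel X) : Prop := forall x f g, T x f -> T x g -> f = g.

End Rel.

(* Every domain point of the Hermitian relation T is orthogonal to T(0), so on the
   domain one can replace f and g in (x, f+g) by their projections Pf, Pg onto
   M = T(0)^perp: since M reduces S and A, (x, Pf) is in S and (x, Pg) in A.  An
   element (x, f) of a relation Y with Y(0) contained in T(0) belongs to the operator
   part Y_s exactly when f is orthogonal to Y(0); for f in M this is automatic, and
   conversely (x, f) - (x, Pf) puts f - Pf in Y(0), which forces f = Pf.  The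
   orthogonal projection onto M is the nearest point map, obtained as the limit of
   a minimizing sequence, which is Cauchy by the parallelogram law. *)
From Pilot Require Import Defs.
From Stdlib Require Import Reals Lra Lia Classical ClassicalEpsilon.
Open Scope R_scope.
Set Implicit Arguments.
Unset Strict Implicit.

Notation re u v := (fst (hip u v)).
Notation im u v := (snd (hip u v)).

Section InnerProduct.
Context {X : CHilbert}.
Implicit Types u v w : X.

Lemma hip_0l v : hip hzero v = Defs.C0.
Proof.
  pose proof (hip_add_l X hzero hzero v) as H. rewrite hadd_0 in H.
  destruct (hip hzero v) as [a b]. unfold Cadd in H; simpl in H.
  injection H; intros. unfold Defs.C0; f_equal; lra.
Qed.

Lemma hip_0r v : hip v hzero = Defs.C0.
Proof. rewrite (hip_conj X hzero v), hip_0l. unfold Cconj, Defs.C0; simpl; f_equal; ring. Qed.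

Lemma hip_C0_iff u v : hip u v = Defs.C0 <-> re u v = 0 /\ im u v = 0.
Proof.
  destruct (hip u v) as [a b]; unfold Defs.C0; simpl.
  split; [intro H; injection H; auto | intros [-> ->]; reflexivity].
Qed.

Lemma hip_C0_sym u v : hip u v = Defs.C0 -> hip v u = Defs.C0.
Proof. intro H. rewrite (hip_conj X u v), H. unfold Cconj, Defs.C0; simpl; f_equal; ring. Qed.

Lemma re_0l v : re hzero v = 0. Proof. now rewrite hip_0l. Qed.
Lemma re_0r v : re v hzero = 0. Proof. now rewrite hip_0r. Qed.

Lemma re_sym u v : re u v = re v u.
Proof. now rewrite (hip_conj X u v). Qed.

Lemma re_addl u v w : re (hadd u v) w = re u w + re v w.
Proof. now rewrite hip_add_l. Qed.

Lemma re_addr w u v : re w (hadd u v) = re w u + re w v.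
Proof.
  rewrite (hip_conj X (hadd u v) w), (hip_conj X u w), (hip_conj X v w), hip_add_l.
  reflexivity.
Qed.

Lemma im_addr w u v : im w (hadd u v) = im w u + im w v.
Proof.
  rewrite (hip_conj X (hadd u v) w), (hip_conj X u w), (hip_conj X v w), hip_add_l.
  unfold Cconj, Cadd; simpl; ring.
Qed.

Lemma re_oppl u w : re (hopp u) w = - re u w.
Proof. pose proof (re_addl u (hopp u) w) as H. rewrite hadd_opp, re_0l in H. lra. Qed.

Lemma re_oppr w u : re w (hopp u) = - re w u.
Proof. pose proof (re_addr w u (hopp u)) as H. rewrite hadd_opp, re_0r in H. lra. Qed.

Lemma im_oppr w u : im w (hopp u) = - im w u.
Proof.
  pose proof (im_addr w u (hopp u)) as H. rewrite hadd_opp, hip_0r in H. simpl in H. lra.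
Qed.

Lemma re_scalRl t u w : re (hscal (t, 0) u) w = t * re u w.
Proof. rewrite hip_scal_l. destruct (hip u w). unfold Cmul; simpl; ring. Qed.

Lemma re_scalRr t w u : re w (hscal (t, 0) u) = t * re w u.
Proof. now rewrite re_sym, re_scalRl, re_sym. Qed.

Lemma hsub_eq u v : nrm2 (hsub u v) = 0 -> u = v.
Proof.
  intro H.
  assert (Hi : im (hsub u v) (hsub u v) = 0).
  { pose proof (hip_conj X (hsub u v) (hsub u v)) as Hc.
    destruct (hip (hsub u v) (hsub u v)); unfold Cconj in Hc; injection Hc; simpl; lra. }
  assert (H0 : hsub u v = hzero) by (apply (hip_def X), hip_C0_iff; auto).
  unfold hsub in H0.
  rewrite <- (hadd_0 X u), <- (hadd_opp X v), (hadd_comm X v), hadd_assoc, H0, hadd_comm,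
    hadd_0.
  reflexivity.
Qed.

Lemma hadd_same_zero v : hadd v v = v -> v = hzero.
Proof.
  intro H.
  assert (H0 : hadd (hadd v v) (hopp v) = hadd v (hopp v)) by now rewrite H.
  now rewrite <- hadd_assoc, hadd_opp, hadd_0 in H0.
Qed.

Lemma hscal_C0 v : hscal Defs.C0 v = hzero.
Proof.
  apply hadd_same_zero. rewrite <- hscal_distr_c.
  replace (Cadd Defs.C0 Defs.C0) with Defs.C0 by (unfold Cadd, Defs.C0; simpl; f_equal; ring).
  reflexivity.
Qed.

Lemma hscal_m1 v : hscal (-1, 0) v = hopp v.
Proof.
  assert (H : hadd v (hscal (-1, 0) v) = hzero).
  { rewrite <- (hscal_1 X v) at 1. rewrite <- hscal_distr_c.
    replace (Cadd Defs.C1 (-1, 0)) with Defs.C0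
      by (unfold Cadd, Defs.C0, Defs.C1; simpl; f_equal; ring).
    apply hscal_C0. }
  rewrite <- (hadd_0 X (hopp v)), <- H, hadd_assoc, (hadd_comm X (hopp v)), hadd_opp,
    hadd_comm, hadd_0.
  reflexivity.
Qed.

End InnerProduct.

Ltac re_expand := unfold nrm2, hsub in *;
  repeat rewrite ?re_addl, ?re_addr, ?re_oppl, ?re_oppr, ?re_scalRl, ?re_scalRr, ?re_0l,
    ?re_0r in *.

Section Projection.
Context {X : CHilbert}.
Implicit Types (K : X -> Prop) (u v x p q : X).

Lemma perp_add K u v : perp K u -> perp K v -> perp K (hadd u v).
Proof.
  intros Hu Hv z Kz.
  pose proof (proj1 (hip_C0_iff _ _) (Hu z Kz)) as [Hu1 Hu2].
  pose proof (proj1 (hip_C0_iff _ _) (Hv z Kz)) as [Hv1 Hv2].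
  apply hip_C0_iff. rewrite re_addr, im_addr. split; lra.
Qed.

Lemma perp_antitone K L : (forall z, K z -> L z) -> forall y, perp L y -> perp K y.
Proof. intros HKL y Hy z Kz. exact (Hy z (HKL z Kz)). Qed.

Lemma perp_decomp_unique K u p q :
  K p -> perp K (hsub u p) -> K q -> perp K (hsub u q) -> p = q.
Proof.
  intros Kp Hp Kq Hq. apply hsub_eq.
  pose proof (proj1 (hip_C0_iff _ _) (Hp p Kp)). pose proof (proj1 (hip_C0_iff _ _) (Hp q Kq)).
  pose proof (proj1 (hip_C0_iff _ _) (Hq p Kp)). pose proof (proj1 (hip_C0_iff _ _) (Hq q Kq)).
  re_expand. pose proof (re_sym p q). lra.
Qed.

Lemma parallelogram x u v :
  nrm2 (hsub u v) + 4 * nrm2 (hsub x (hscal (/ 2, 0) (hadd u v)))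
  = 2 * nrm2 (hsub x u) + 2 * nrm2 (hsub x v).
Proof. re_expand. rewrite (re_sym u v), (re_sym u x), (re_sym v x). field. Qed.

(* Young's inequality 2 re(a,b) <= e |a|^2 + |b|^2 / e, a weak triangle inequality. *)
Lemma nrm2_sub_le_weighted x k p e : 0 < e ->
  nrm2 (hsub x p) <= (1 + e) * nrm2 (hsub x k) + (1 + / e) * nrm2 (hsub k p).
Proof.
  intro He.
  set (a := hsub x k). set (b := hsub k p).
  assert (Hid : nrm2 (hsub x p) = re a a + 2 * re a b + re b b).
  { unfold a, b. re_expand. rewrite (re_sym k x), (re_sym p x), (re_sym p k). ring. }
  pose proof (hip_pos X (hadd (hscal (e, 0) a) (hopp b))) as Hp.
  rewrite ?re_addl, ?re_addr, ?re_oppl, ?re_oppr, ?re_scalRl, ?re_scalRr, (re_sym b a) in Hp.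
  assert (2 * re a b <= e * re a a + / e * re b b).
  { apply (Rmult_le_reg_l e); [exact He|]. rewrite Rmult_plus_distr_l.
    replace (e * (/ e * re b b)) with (re b b) by (field; lra). nra. }
  rewrite Hid. unfold nrm2. fold a b. nra.
Qed.

Lemma nonneg_quadratic_linear_coef c n :
  0 <= n -> (forall t, 0 <= - 2 * t * c + t * t * n) -> c = 0.
Proof.
  intros Hn Hq.
  set (s := / (n + 1)).
  assert (Hs : 0 < s) by (apply Rinv_0_lt_compat; lra).
  assert (Hsn : s * n <= 1).
  { unfold s. apply (Rmult_le_reg_l (n + 1)); [lra|].
    replace ((n + 1) * (/ (n + 1) * n)) with n by (field; lra). lra. }
  specialize (Hq (s * c)).
  assert (Hcc : s * (c * c) <= 0) by nra.
  assert (c * c <= 0) by nra.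
  nra.
Qed.

Lemma nearest_point_perp K x p : subspace K -> K p ->
  (forall k, K k -> nrm2 (hsub x p) <= nrm2 (hsub x k)) -> perp K (hsub x p).
Proof.
  intros [_ [Kadd Kscal]] Kp Hmin.
  assert (Hre : forall k, K k -> re k (hsub x p) = 0).
  { intros k Kk.
    apply (nonneg_quadratic_linear_coef (hip_pos X k)). intro t.
    pose proof (Hmin _ (Kadd _ _ Kp (Kscal (t, 0) _ Kk))) as H.
    assert (Heq : nrm2 (hsub x (hadd p (hscal (t, 0) k)))
                  = nrm2 (hsub x p) - 2 * t * re k (hsub x p) + t * t * nrm2 k).
    { re_expand. rewrite (re_sym k x), (re_sym k p), (re_sym p x). ring. }
    unfold nrm2 in *. lra. }
  intros k Kk. apply hip_C0_iff. split; [now apply Hre|].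
  (* the imaginary part of (k, x - p) is minus the real part of (i k, x - p) *)
  pose proof (Hre _ (Kscal (0, 1) _ Kk)) as H.
  rewrite hip_scal_l in H. unfold Cmul in H; simpl in H. lra.
Qed.

Lemma dist2_infimum K x : K hzero -> exists d, 0 <= d /\
  (forall k, K k -> d <= nrm2 (hsub x k)) /\
  (forall eps, 0 < eps -> exists k, K k /\ nrm2 (hsub x k) < d + eps).
Proof.
  intro K0.
  set (E := fun r => exists k, K k /\ r = - nrm2 (hsub x k)).
  assert (HE0 : is_upper_bound E 0).
  { intros r [k [_ ->]]. pose proof (hip_pos X (hsub x k)). unfold nrm2. lra. }
  destruct (completeness E (ex_intro _ 0 HE0) (ex_intro _ _ (ex_intro _ hzero (conj K0 eq_refl))))
    as [m [Hub Hlub]].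
  exists (- m). split; [pose proof (Hlub 0 HE0); lra|]. split.
  - intros k Kk. assert (E (- nrm2 (hsub x k))) by (exists k; auto).
    pose proof (Hub _ H). lra.
  - intros eps He. apply NNPP. intro Hn.
    assert (H : is_upper_bound E (m - eps)).
    { intros r [k [Kk ->]]. apply Rnot_lt_le. intro Hlt.
      apply Hn. exists k. split; [exact Kk | lra]. }
    pose proof (Hlub _ H). lra.
Qed.

Lemma inv_INR_small eps : 0 < eps -> exists N, forall n, (N <= n)%nat -> / INR (S n) < eps.
Proof.
  intro He. destruct (archimed_cor1 eps He) as [N [HN HN0]].
  exists N. intros n Hn. eapply Rle_lt_trans; [|exact HN].
  apply Rinv_le_contravar; [apply lt_0_INR; exact HN0 | apply le_INR; lia].
Qed.

Lemma converges_nrm2 (ks : nat -> X) p : converges ks p ->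
  forall eps, 0 < eps -> exists N, forall n, (N <= n)%nat -> nrm2 (hsub (ks n) p) < eps.
Proof.
  intros Hc eps He. destruct (Hc (sqrt eps) (sqrt_lt_R0 _ He)) as [N HN].
  exists N. intros n Hn. exact (sqrt_lt_0_alt _ _ (HN n Hn)).
Qed.

Lemma minimizing_cauchy K x d (ks : nat -> X) : subspace K -> (forall n, K (ks n)) ->
  (forall k, K k -> d <= nrm2 (hsub x k)) ->
  (forall n, nrm2 (hsub x (ks n)) < d + / INR (S n)) ->
  forall i j, nrm2 (hsub (ks i) (ks j)) <= 2 * / INR (S i) + 2 * / INR (S j).
Proof.
  intros [_ [Kadd Kscal]] Kks Hd Hks i j.
  pose proof (parallelogram x (ks i) (ks j)).
  pose proof (Hd _ (Kscal (/ 2, 0) _ (Kadd _ _ (Kks i) (Kks j)))).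
  pose proof (Hks i). pose proof (Hks j). lra.
Qed.

Lemma minimizing_limit_le x d (ks : nat -> X) p : 0 <= d ->
  (forall n, nrm2 (hsub x (ks n)) < d + / INR (S n)) -> converges ks p ->
  nrm2 (hsub x p) <= d.
Proof.
  intros Hd0 Hks Hc. apply Rle_plus_epsilon. intros eps He.
  set (e := eps / (2 * (d + 1))).
  assert (He0 : 0 < e) by (unfold e; apply Rdiv_lt_0_compat; lra).
  assert (Hed : e * (2 * (d + 1)) = eps) by (unfold e; field; lra).
  destruct (inv_INR_small (eps := eps / (4 * (1 + e)))) as [N1 HN1].
  { apply Rdiv_lt_0_compat; lra. }
  assert (Hie : 0 < / e) by (apply Rinv_0_lt_compat; lra).
  destruct (converges_nrm2 Hc (eps := eps / (4 * (1 + / e)))) as [N2 HN2].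
  { apply Rdiv_lt_0_compat; lra. }
  set (n := Nat.max N1 N2).
  specialize (HN1 n ltac:(lia)). specialize (HN2 n ltac:(lia)).
  pose proof (nrm2_sub_le_weighted x (ks n) p He0) as Hw.
  assert (H1 : (1 + e) * / INR (S n) < eps / 4).
  { replace (eps / 4) with ((1 + e) * (eps / (4 * (1 + e)))) by (field; lra).
    apply Rmult_lt_compat_l; lra. }
  assert (H2 : (1 + / e) * nrm2 (hsub (ks n) p) < eps / 4).
  { replace (eps / 4) with ((1 + / e) * (eps / (4 * (1 + / e)))) by (field; lra).
    apply Rmult_lt_compat_l; lra. }
  pose proof (Hks n). nra.
Qed.

Lemma nearest_point_exists K x : closed_subspace K ->
  exists p, K p /\ forall k, K k -> nrm2 (hsub x p) <= nrm2 (hsub x k).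
Proof.
  intros [HK Kcl]. pose proof HK as [K0 _].
  destruct (dist2_infimum x K0) as [d [Hd0 [Hd Hinf]]].
  destruct (choice (fun n k => K k /\ nrm2 (hsub x k) < d + / INR (S n))) as [ks Hks].
  { intro n. apply Hinf, Rinv_0_lt_compat, lt_0_INR. lia. }
  assert (Hcauchy := minimizing_cauchy HK (fun n => proj1 (Hks n)) Hd (fun n => proj2 (Hks n))).
  destruct (hcomplete X ks) as [p Hp].
  { intros eps He. destruct (inv_INR_small (eps := eps * eps / 4)) as [N HN]; [nra|].
    exists N. intros i j Hi Hj. rewrite <- (sqrt_square eps) by lra.
    apply sqrt_lt_1_alt. split; [apply (hip_pos X)|].
    pose proof (Hcauchy i j) as Hij. pose proof (HN i Hi). pose proof (HN j Hj).
    unfold nrm2, hsub in Hij. lra. }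
  exists p. split; [exact (Kcl ks p (fun n => proj1 (Hks n)) Hp)|].
  intros k Kk. pose proof (Hd k Kk).
  pose proof (minimizing_limit_le Hd0 (fun n => proj2 (Hks n)) Hp). lra.
Qed.

Lemma orth_proj_exists K : closed_subspace K -> exists P, is_orth_proj K P.
Proof.
  intro HK. apply (choice (fun x p => K p /\ perp K (hsub x p))). intro x.
  destruct (nearest_point_exists x HK) as [p [Kp Hp]].
  exists p. split; [exact Kp | exact (nearest_point_perp (proj1 HK) Kp Hp)].
Qed.

Section OrthProj.
Variables (K : X -> Prop) (P : X -> X).
Hypothesis HP : is_orth_proj K P.

Lemma orth_proj_id u : K u -> P u = u.
Proof.
  intro Ku. apply (perp_decomp_unique (proj1 (HP u)) (proj2 (HP u)) Ku).
  intros z _. unfold hsub. rewrite hadd_opp. apply hip_0r.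
Qed.

Lemma orth_proj_add u v : subspace K -> P (hadd u v) = hadd (P u) (P v).
Proof.
  intros [_ [Kadd _]].
  apply (perp_decomp_unique (proj1 (HP _)) (proj2 (HP _)) (Kadd _ _ (proj1 (HP u)) (proj1 (HP v)))).
  intros z Kz.
  pose proof (proj1 (hip_C0_iff _ _) (proj2 (HP u) z Kz)) as [Hu1 Hu2].
  pose proof (proj1 (hip_C0_iff _ _) (proj2 (HP v) z Kz)) as [Hv1 Hv2].
  unfold hsub in *. apply hip_C0_iff.
  repeat rewrite ?re_addr, ?re_oppr, ?im_addr, ?im_oppr in *. split; lra.
Qed.

End OrthProj.
End Projection.

Section LinearRelations.
Context {X : CHilbert}.
Implicit Types (Y : rel X) (K M : X -> Prop) (x y f g : X).

Lemma subspace2_sub Y x f y g : subspace2 Y -> Y x f -> Y y g -> Y (hsub x y) (hsub f g).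
Proof.
  intros [_ [Yadd Yscal]] Hf Hg. unfold hsub. rewrite <- !hscal_m1.
  apply Yadd; [exact Hf | apply Yscal, Hg].
Qed.

Lemma Tsop_iff Y x f : Tsop Y x f <-> Y x f /\ perp (at0 Y) f.
Proof.
  unfold Tsop, Tinf, ip2, perp, at0.
  split; intros [Hf H]; split; auto.
  - intros g Hg. apply hip_C0_sym.
    specialize (H hzero g (conj eq_refl Hg)). rewrite hip_0r in H.
    destruct (hip f g). unfold Cadd, Defs.C0 in *; simpl in H.
    injection H; intros; f_equal; lra.
  - intros y g [-> Hg]. rewrite hip_0r, (hip_C0_sym (H g Hg)).
    unfold Cadd, Defs.C0; simpl; f_equal; ring.
Qed.

Lemma perp_at0_single_valued Y x f g : subspace2 Y -> Y x f -> Y x g ->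
  perp (at0 Y) f -> perp (at0 Y) g -> f = g.
Proof.
  intros HY Hf Hg Pf Pg.
  assert (H0 : at0 Y (hsub f g)).
  { unfold at0. rewrite <- (hadd_opp X x). exact (subspace2_sub HY Hf Hg). }
  apply hsub_eq.
  pose proof (proj1 (hip_C0_iff _ _) (Pf _ H0)). pose proof (proj1 (hip_C0_iff _ _) (Pg _ H0)).
  unfold nrm2. unfold hsub at 2. rewrite re_addr, re_oppr. lra.
Qed.

Lemma hermitian_dom_perp_at0 Y x : hermitian Y -> dom Y x -> perp (at0 Y) x.
Proof.
  intros HY [f Hf] z Hz. rewrite (HY _ _ Hz x f Hf). apply hip_0l.
Qed.

Lemma hermitian_sub Y Y' : (forall x f, Y' x f -> Y x f) -> hermitian Y -> hermitian Y'.
Proof. intros HYY HY y g Hg x f Hf. exact (HY y g (HYY y g Hg) x f (HYY x f Hf)). Qed.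

Lemma converges2_split (u v : nat -> X) x f :
  converges2 u v x f -> converges u x /\ converges v f.
Proof.
  intro H.
  split; intros eps He; destruct (H eps He) as [N HN]; exists N; intros n Hn;
    eapply Rle_lt_trans; try exact (HN n Hn); apply sqrt_le_1_alt;
    pose proof (hip_pos X (hsub (u n) x)); pose proof (hip_pos X (hsub (v n) f));
    unfold nrm2; lra.
Qed.

Lemma closed2_restr2 Y M : closed2 Y -> closed_subspace M -> closed2 (restr2 Y M).
Proof.
  intros [[Y0 [Yadd Yscal]] Ycl] [[M0 [Madd Mscal]] Mcl]. split.
  - unfold restr2. split; [auto|split].
    + intros x f y g [? [? ?]] [? [? ?]]. auto.
    + intros a x f [? [? ?]]. auto.
  - intros u v x f Huv Hc. destruct (converges2_split Hc) as [Hu Hv].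
    split; [exact (Ycl u v x f (fun n => proj1 (Huv n)) Hc)|].
    split; [exact (Mcl u x (fun n => proj1 (proj2 (Huv n))) Hu)
           | exact (Mcl v f (fun n => proj2 (proj2 (Huv n))) Hv)].
Qed.

Lemma at0_rel_sum_l (S A : rel X) a : subspace2 A -> at0 S a -> rel_sum S A hzero a.
Proof.
  intros [A0 _] Ha. exists a, hzero. split; [exact Ha|]. split; [exact A0 | now rewrite hadd_0].
Qed.

Lemma at0_rel_sum_r (S A : rel X) a : subspace2 S -> at0 A a -> rel_sum S A hzero a.
Proof.
  intros [S0 _] Ha. exists hzero, a. split; [exact S0|].
  split; [exact Ha | now rewrite hadd_comm, hadd_0].
Qed.

Section Reducing.
Variables (M : X -> Prop) (P : X -> X) (Y : rel X).
Hypothesis HP : is_orth_proj M P.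
Hypothesis HMY : forall z, M z -> perp (at0 Y) z.

Lemma Tsop_of_range x f : Y x f -> M f -> Tsop Y x f.
Proof. intros Hf Mf. apply Tsop_iff. split; [exact Hf | exact (HMY Mf)]. Qed.

Hypothesis HY : subspace2 Y.
Hypothesis HYP : forall x f, Y x f -> Y (P x) (P f).

Lemma reduces_graph_proj x f : M x -> Y x f -> Y x (P f).
Proof. intros Mx Hf. rewrite <- (orth_proj_id HP Mx) at 1. exact (HYP Hf). Qed.

Lemma Tsop_range x f : M x -> Tsop Y x f -> M f.
Proof.
  intros Mx Hs. apply Tsop_iff in Hs as [Hf Hperp].
  destruct (HP f) as [MPf _].
  (* f - Pf lies in Y(0), to which both f and Pf are orthogonal *)
  assert (H0 : at0 Y (hsub f (P f))).
  { unfold at0. rewrite <- (hadd_opp X x). exact (subspace2_sub HY Hf (reduces_graph_proj Mx Hf)). }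
  pose proof (proj1 (hip_C0_iff _ _) (Hperp _ H0)).
  pose proof (proj1 (hip_C0_iff _ _) (HMY MPf H0)).
  assert (Hf_eq : f = P f).
  { apply hsub_eq. unfold nrm2. unfold hsub at 2. rewrite re_addr, re_oppr. lra. }
  now rewrite Hf_eq.
Qed.

End Reducing.
End LinearRelations.

Theorem theorem3p3 (X : CHilbert) (T S A : rel X) :
  closed2 T -> closed2 S -> closed2 A ->
  hermitian T -> hermitian S -> hermitian A ->
  (forall x, dom T x <-> dom S x) ->
  (forall x, dom T x -> dom A x) ->
  (forall x h, T x h <-> rel_sum S A x h) ->
  reduces (perp (at0 T)) S ->
  reduces (perp (at0 T)) A ->
  (forall x, dom T x ->
     forall h, Tsop T x h <-> exists f g, Tsop S x f /\ Tsop A x g /\ h = hadd f g) /\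
  (forall x f, restr2 S (perp (at0 T)) x f <-> Tsop S x f) /\
  (forall x f, restr2 A (perp (at0 T)) x f -> Tsop A x f) /\
  (closed2 (restr2 A (perp (at0 T))) /\
   hermitian (restr2 A (perp (at0 T))) /\
   is_operator (restr2 A (perp (at0 T))) /\
   (forall x, dom T x -> dom (restr2 A (perp (at0 T))) x)).
Proof.
  intros _ [HS _] [HA HAcl] HTh _ HAh HDS HDA HTsum [HMcl HredS] [_ HredA].
  set (M := perp (at0 T)) in *.
  destruct (orth_proj_exists HMcl) as [P HP].
  pose proof (HredS P HP) as RS. pose proof (HredA P HP) as RA.
  assert (MS : forall z, M z -> perp (at0 S) z).
  { apply perp_antitone. intros a Ha. apply HTsum, at0_rel_sum_l; assumption. }
  assert (MA : forall z, M z -> perp (at0 A) z).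
  { apply perp_antitone. intros a Ha. apply HTsum, at0_rel_sum_r; assumption. }
  assert (DM : forall x, dom T x -> M x) by exact (fun x => hermitian_dom_perp_at0 HTh).
  split; [|split; [|split; [|split; [|split; [|split]]]]].
  - intros x Dx h. pose proof (DM x Dx) as Mx. split.
    + intros [Th Mh]%Tsop_iff. apply HTsum in Th as [f [g [Hf [Hg ->]]]].
      exists (P f), (P g).
      split; [exact (Tsop_of_range MS (reduces_graph_proj HP RS Mx Hf) (proj1 (HP f)))|].
      split; [exact (Tsop_of_range MA (reduces_graph_proj HP RA Mx Hg) (proj1 (HP g)))|].
      rewrite <- (orth_proj_add HP f g (proj1 HMcl)). symmetry. exact (orth_proj_id HP Mh).
    + intros [f [g [Hf [Hg ->]]]]. apply Tsop_iff. split.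
      * apply HTsum. exists f, g. split; [apply Hf|]. split; [apply Hg | reflexivity].
      * exact (perp_add (Tsop_range HP MS HS RS Mx Hf) (Tsop_range HP MA HA RA Mx Hg)).
  - intros x f. split.
    + intros [Hf [_ Mf]]. exact (Tsop_of_range MS Hf Mf).
    + intros Hs. assert (Mx : M x) by (apply DM, HDS; exists f; apply Hs).
      split; [apply Hs|]. split; [exact Mx | exact (Tsop_range HP MS HS RS Mx Hs)].
  - intros x f [Hf [_ Mf]]. exact (Tsop_of_range MA Hf Mf).
  - exact (closed2_restr2 (conj HA HAcl) HMcl).
  - exact (hermitian_sub (fun x f H => proj1 H) HAh).
  - intros x f g [Hf [_ Mf]] [Hg [_ Mg]].
    exact (perp_at0_single_valued HA Hf Hg (MA f Mf) (MA g Mg)).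
  - intros x Dx. destruct (HDA x Dx) as [f Hf].
    exists (P f). split; [exact (reduces_graph_proj HP RA (DM x Dx) Hf)|].
    split; [exact (DM x Dx) | exact (proj1 (HP f))].
Qed.
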